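(* Let $\mathsf{COM}$ be a commitment scheme satisfying computational hiding, let $\mathsf{DS}$ be a digital signature scheme, and let $\mathcal{H}$ be a hash function family. Then the $1$-out-of-$n$ oblivious signature scheme $(1,n)\text{-}\mathsf{OS}_{\mathsf{Ours}}[\mathcal{H},\mathsf{COM},\mathsf{DS}]$ (described in the context) satisfies ambiguity.
   Context: A function is negligible in $\lambda$ if it is eventually smaller than $1/p(\lambda)$ for every polynomial $p$; PPT means probabilistic polynomial time. Commitment scheme $\mathsf{COM}=(\mathsf{KeyGen},\mathsf{Commit})$: $\mathsf{KeyGen}(1^\lambda)$ outputs a commitment key $\mathsf{ck}$ defining a message space, a randomness space $\Omega_{\mathsf{ck}}$ and a commitment space; $\mathsf{Commit}(\mathsf{ck},m;r)$ outputs a commitment $c$. Computational hiding: for every PPT $\mathsf{A}$, the quantity $\left|\Pr[b=b^*]-\tfrac12\right|$ is negligible in the experiment $\mathsf{ck}\leftarrow\mathsf{KeyGen}(1^\lambda)$, $(m_0,m_1,\mathsf{st})\leftarrow\mathsf{A}(\mathsf{ck})$, $b\leftarrow\{0,1\}$ uniformly, $c^*\leftarrow\mathsf{Commit}(\mathsf{ck},m_b)$ (with uniformly random randomness), $b^*\leftarrow\mathsf{A}(c^*,\mathsf{st})$. Digital signature scheme $\mathsf{DS}=(\mathsf{Setup},\mathsf{KeyGen},\mathsf{Sign},\mathsf{Verify})$ with the usual syntax: $\mathsf{Setup}(1^\lambda)\to\mathsf{pp}$, $\mathsf{KeyGen}(\mathsf{pp})\to(\mathsf{vk},\mathsf{sk})$,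 $\mathsf{Sign}(\mathsf{sk},m)\to\sigma$, $\mathsf{Verify}(\mathsf{vk},m,\sigma)\to\{0,1\}$. Hash family $\mathcal{H}=\{H_\lambda\}$ with $H_\lambda=\{H_{\lambda,i}:\{0,1\}^*\to\{0,1\}^\lambda\}_{i\in\mathcal{I}_\lambda}$. Merkle tree (for $n=2^k>1$, a list $M=(m_0,\dots,m_{n-1})$ and a hash $H$): leaf $i$ is labeled by the $k$-bit binary expansion $b_1\cdots b_k$ of $i$ and gets value $h_{b_1\cdots b_k}=H(m_i)$; each internal node $w_{b_1\cdots b_\ell}$ gets $h_{b_1\cdots b_\ell}=H(h_{b_1\cdots b_\ell 0}\,\|\,h_{b_1\cdots b_\ell 1})$; $\mathsf{root}=h_\epsilon=H(h_0\|h_1)$. $\mathsf{MerkleTree}^H(M)$ outputs $\mathsf{root}$ and the whole tree $\mathsf{tree}$. $\mathsf{MerklePath}^H(\mathsf{tree},i)$ outputs $\mathsf{path}=(h_{\bar b_1},h_{b_1\bar b_2},\dots,h_{b_1\cdots b_{k-1}\bar b_k})$ where $\bar b=1-b$. $\mathsf{RootReconstruct}^H(\mathsf{path},m,i)$ sets the leaf value $H(m)$ at position $b_1\cdots b_k$ and recomputes the values up the tree using the sibling values in $\mathsf{path}$, outputting the resulting root value. A $1$-out-of-$n$ oblivious signature scheme has algorithms $(\mathsf{Setup},\mathsf{KeyGen},\mathsf{U}_1,\mathsf{S}_2,\mathsf{U}_{\mathsf{Der}},\mathsf{Verify})$: $\mathsf{U}_1(\mathsf{vk},M,j)$ (user,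 $M$ a list of $n$ messages, $j\in\{0,\dots,n-1\}$) outputs a first message and state $(\mu,\mathsf{st})$ or $\bot$; $\mathsf{S}_2(\mathsf{vk},\mathsf{sk},M,\mu)$ (signer) outputs a second message $\rho$ or $\bot$; $\mathsf{U}_{\mathsf{Der}}(\mathsf{vk},\mathsf{st},\rho)$ outputs $(m,\sigma)$ or $\bot$; $\mathsf{Verify}(\mathsf{vk},m,\sigma)\in\{0,1\}$. Ambiguity: for every PPT $\mathsf{A}$, $\left|\Pr[b^*=b]-\tfrac12\right|$ is negligible in $\lambda$ in the experiment: $\mathsf{pp}\leftarrow\mathsf{Setup}(1^\lambda)$, $(\mathsf{vk},\mathsf{sk})\leftarrow\mathsf{KeyGen}(\mathsf{pp})$, $(M=(m_0,\dots,m_{n-1}),i_0,i_1,\mathsf{st}_{\mathsf{A}})\leftarrow\mathsf{A}(\mathsf{pp},\mathsf{vk},\mathsf{sk})$, $b\leftarrow\{0,1\}$ uniformly, $(\mu,\mathsf{st})\leftarrow\mathsf{U}_1(\mathsf{vk},M,i_b)$, $b^*\leftarrow\mathsf{A}(\mu,\mathsf{st}_{\mathsf{A}})$. The scheme $(1,n)\text{-}\mathsf{OS}_{\mathsf{Ours}}[\mathcal{H},\mathsf{COM},\mathsf{DS}]$ (with $n>1$ a power of $2$): - $\mathsf{Setup}(1^\lambda)$: $H\leftarrow H_\lambda$ uniformly, $\mathsf{ck}\leftarrow\mathsf{COM.KeyGen}(1^\lambda)$, $\mathsf{pp}^{\mathsf{DS}}\leftarrow\mathsf{DS.Setup}(1^\lambda)$;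 output $\mathsf{pp}=(H,\mathsf{ck},\mathsf{pp}^{\mathsf{DS}})$. - $\mathsf{KeyGen}(\mathsf{pp})$: $(\mathsf{vk},\mathsf{sk})\leftarrow\mathsf{DS.KeyGen}(\mathsf{pp}^{\mathsf{DS}})$. - $\mathsf{U}_1(\mathsf{vk},M=(m_0,\dots,m_{n-1}),j)$: if $m_t=m_{t'}$ for some $t\ne t'$, output $\bot$; else $r\leftarrow\Omega_{\mathsf{ck}}$ uniformly, $c\leftarrow\mathsf{COM.Commit}(\mathsf{ck},m_j;r)$, output $\mu=c$ and $\mathsf{st}=(M,c,r,j)$. - $\mathsf{S}_2(\mathsf{vk},\mathsf{sk},M,\mu=c)$: if $M$ has two equal entries at distinct positions, output $\bot$; else $(\mathsf{root},\mathsf{tree})\leftarrow\mathsf{MerkleTree}^H(M)$, output $\rho=\sigma^{\mathsf{DS}}\leftarrow\mathsf{DS.Sign}(\mathsf{sk},(\mathsf{root},c))$. - $\mathsf{U}_{\mathsf{Der}}(\mathsf{vk},\mathsf{st}=(M,c,r,j),\rho=\sigma^{\mathsf{DS}})$: $(\mathsf{root},\mathsf{tree})\leftarrow\mathsf{MerkleTree}^H(M)$, $\mathsf{path}\leftarrow\mathsf{MerklePath}^H(\mathsf{tree},j)$; if $\mathsf{DS.Verify}(\mathsf{vk},(\mathsf{root},c),\sigma^{\mathsf{DS}})=0$ output $\bot$; else output $(m_j,\sigma)$ with $\sigma=(\mathsf{root},c,\sigma^{\mathsf{DS}},\mathsf{path},j,r)$. - $\mathsf{Verify}(\mathsf{vk},m,\sigma=(\mathsf{root},c,\sigma^{\mathsf{DS}},\mathsf{path},j,r))$: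 output $1$ iff $\mathsf{root}=\mathsf{RootReconstruct}^H(\mathsf{path},m,j)$, $c=\mathsf{COM.Commit}(\mathsf{ck},m;r)$, and $\mathsf{DS.Verify}(\mathsf{vk},(\mathsf{root},c),\sigma^{\mathsf{DS}})=1$. *)

From HB Require Import structures.
From mathcomp Require Import all_boot all_order all_algebra.
Unset Implicit Arguments. Unset Strict Implicit. Unset Printing Implicit Defensive.
Import Order.TTheory GRing.Theory Num.Theory.
Local Open Scope ring_scope.

Definition distr (T : Type) := seq (rat * T).
Definition dret {T : Type} (x : T) : distr T := [:: (1, x)].
Definition dbind {A B : Type} (d : distr A) (f : A -> distr B) : distr B :=
  flatten [seq [seq (p.1 * q.1, q.2) | q <- f p.2] | p <- d].
(* uniform distribution over the entries of a (duplicate-free) list *)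
Definition dunif_seq {T : Type} (s : seq T) : distr T :=
  [seq ((size s)%:R^-1, x) | x <- s].
Definition dunif (T : finType) : distr T := dunif_seq (enum T).
Definition prob {T : Type} (d : distr T) (E : T -> bool) : rat :=
  \sum_(p <- d | E p.2) p.1.
Definition is_distr {T : Type} (d : distr T) : bool :=
  all (fun p => 0 <= p.1) d && (\sum_(p <- d) p.1 == 1).

(* negligible functions: eventually below 1/p(lambda) for every polynomial p
   (with positive leading coefficient, i.e. eventually positive) *)
Definition negligible (f : nat -> rat) : Prop :=
  forall p : {poly rat}, 0 < lead_coef p ->
    exists N : nat, forall l : nat, (N <= l)%N -> `|f l| < (p.[l%:R])^-1.

Definition Alg (X Y : nat -> Type) := forall l : nat, X l -> distr (Y l).
Definition Fn (X Y : nat -> Type) := forall l : nat, X l -> Y l.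

Definition valid_alg (X Y : nat -> Type) (f : Alg X Y) : Prop :=
  forall l x, is_distr (f l x).

(* Closure properties satisfied by the class of PPT algorithms (resp. of
   deterministic polynomial-time functions).  The theorem is stated for
   every class [Eff]/[EffF] with these properties; the genuine PPT class is
   one such class. *)
Definition EffClass := forall X Y : nat -> Type, Alg X Y -> Prop.
Definition EffFClass := forall X Y : nat -> Type, Fn X Y -> Prop.

Record ppt_closed (Eff : EffClass) (EffF : EffFClass) : Prop := {
  ef_id : forall X, EffF X X (fun _ x => x);
  ef_comp : forall X Y Z (f : Fn X Y) (g : Fn Y Z),
      EffF X Y f -> EffF Y Z g -> EffF X Z (fun l x => g l (f l x));
  ef_fst : forall X Y, EffF (fun l => X l * Y l)%type X (fun _ p => p.1);
  ef_snd : forall X Y, EffF (fun l => X l * Y l)%type Y (fun _ p => p.2);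
  ef_pair : forall X Y Z (f : Fn X Y) (g : Fn X Z),
      EffF X Y f -> EffF X Z g ->
      EffF X (fun l => Y l * Z l)%type (fun l x => (f l x, g l x));
  ef_tt : forall X, EffF X (fun _ => unit) (fun _ _ => tt);
  ef_bool : forall X (b : bool), EffF X (fun _ => bool) (fun _ _ => b);
  ef_nil : forall X, EffF X (fun _ => seq bool) (fun _ _ => [::]);
  ef_some : forall X, EffF X (fun l => option (X l)) (fun _ x => Some x);
  ef_none : forall X Y, EffF X (fun l => option (Y l)) (fun _ _ => None);
  ef_if : forall X Y (c : Fn X (fun _ => bool)) (f g : Fn X Y),
      EffF X (fun _ => bool) c -> EffF X Y f -> EffF X Y g ->
      EffF X Y (fun l x => if c l x then f l x else g l x);
  ef_tnth : forall (T : nat -> Type) (n : nat),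
      EffF (fun l => n.-tuple (T l) * 'I_n)%type T (fun _ p => tnth p.1 p.2);
  ef_uniq : forall n : nat,
      EffF (fun l => n.-tuple (seq bool)) (fun _ => bool) (fun _ M => uniq M);
  ef_ext : forall X Y (f g : Fn X Y),
      (forall l x, f l x = g l x) -> EffF X Y f -> EffF X Y g;
  e_ret : forall X Y (f : Fn X Y), EffF X Y f -> Eff X Y (fun l x => dret (f l x));
  e_pre : forall X Y Z (h : Fn X Y) (f : Alg Y Z),
      EffF X Y h -> Eff Y Z f -> Eff X Z (fun l x => f l (h l x));
  e_bind : forall X Y Z (f : Alg X Y) (g : Alg (fun l => X l * Y l)%type Z),
      Eff X Y f -> Eff (fun l => X l * Y l)%type Z g ->
      Eff X Z (fun l x => dbind (f l x) (fun y => g l (x, y)));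
  e_coin : forall X, Eff X (fun _ => bool) (fun _ _ => dunif bool);
  e_ext : forall X Y (f g : Alg X Y),
      (forall l x, f l x = g l x) -> Eff X Y f -> Eff X Y g
}.

Record hash_family := {
  hf_idx : nat -> finType;
  hf_eval : forall l, hf_idx l -> seq bool -> l.-tuple bool
}.

Definition hash_ok (Eff : EffClass) (EffF : EffFClass) (Hf : hash_family) : Prop :=
  (forall l, 0 < #|hf_idx Hf l|)%N /\
  Eff (fun _ => unit) (fun l => hf_idx Hf l : Type) (fun l _ => dunif (hf_idx Hf l)) /\
  EffF (fun l => (hf_idx Hf l * seq bool)%type) (fun l => l.-tuple bool)
       (fun l p => @hf_eval Hf l p.1 p.2).

(* messages are bit strings; Omega_ck is given as a duplicate-free list
   com_omega l ck of elements of a type com_rnd l *)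
Record com_scheme := {
  com_ck : nat -> Type;
  com_rnd : nat -> eqType;
  com_c : nat -> eqType;
  com_omega : forall l, com_ck l -> seq (com_rnd l);
  com_keygen : forall l, distr (com_ck l);
  com_commit : forall l, com_ck l -> seq bool -> com_rnd l -> com_c l
}.

Definition commit_rand (C : com_scheme) l (ck : com_ck C l) (m : seq bool)
  : distr (com_c C l) :=
  dbind (dunif_seq (com_omega C l ck)) (fun r => dret (com_commit C l ck m r)).

Definition com_ok (Eff : EffClass) (EffF : EffFClass) (C : com_scheme) : Prop :=
  (forall l, is_distr (com_keygen C l)) /\
  (forall l ck, (0 < size (com_omega C l ck))%N /\ uniq (com_omega C l ck)) /\
  Eff (fun _ => unit) (com_ck C) (fun l _ => com_keygen C l) /\
  Eff (com_ck C) (com_rnd C) (fun l ck => dunif_seq (com_omega C l ck)) /\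
  EffF (fun l => (com_ck C l * seq bool * com_rnd C l)%type) (fun l => com_c C l : Type)
       (fun l p => com_commit C l p.1.1 p.1.2 p.2).

Record hid_adv (C : com_scheme) := {
  ha_st : nat -> Type;
  ha1 : Alg (com_ck C) (fun l => (seq bool * seq bool * ha_st l)%type);
  ha2 : Alg (fun l => (com_c C l * ha_st l)%type) (fun _ => bool)
}.

Definition hiding_exp (C : com_scheme) (A : hid_adv C) (l : nat) : distr bool :=
  dbind (com_keygen C l) (fun ck =>
  dbind (ha1 C A l ck) (fun o =>
  let: (m0, m1, st) := o in
  dbind (dunif bool) (fun b =>
  dbind (commit_rand C l ck (if b then m1 else m0)) (fun c =>
  dbind (ha2 C A l (c, st)) (fun b' => dret (b == b')))))).

Definition comp_hiding (Eff : EffClass) (C : com_scheme) : Prop :=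
  forall A : hid_adv C,
    Eff _ _ (ha1 C A) -> Eff _ _ (ha2 C A) -> valid_alg _ _ (ha1 C A) -> valid_alg _ _ (ha2 C A) ->
    negligible (fun l => `| prob (hiding_exp C A l) (fun b => b) - 2%:R^-1 |).

Record ds_scheme (Msg : nat -> Type) := {
  ds_pp : nat -> Type;
  ds_vk : nat -> Type;
  ds_sk : nat -> Type;
  ds_sig : nat -> Type;
  ds_setup : forall l, distr (ds_pp l);
  ds_keygen : forall l, ds_pp l -> distr (ds_vk l * ds_sk l);
  ds_sign : forall l, ds_sk l -> Msg l -> distr (ds_sig l);
  ds_verify : forall l, ds_vk l -> Msg l -> ds_sig l -> bool
}.

Definition ds_ok (Eff : EffClass) (EffF : EffFClass) (Msg : nat -> Type) (D : ds_scheme Msg) : Prop :=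
  (forall l, is_distr (ds_setup _ D l)) /\
  (forall l pp, is_distr (ds_keygen Msg D l pp)) /\
  (forall l sk m, is_distr (ds_sign Msg D l sk m)) /\
  Eff (fun _ => unit) (ds_pp Msg D) (fun l _ => ds_setup _ D l) /\
  Eff (ds_pp Msg D) (fun l => (ds_vk Msg D l * ds_sk Msg D l)%type) (fun l pp => ds_keygen Msg D l pp) /\
  Eff (fun l => (ds_sk Msg D l * Msg l)%type) (ds_sig Msg D) (fun l p => ds_sign Msg D l p.1 p.2) /\
  EffF (fun l => (ds_vk Msg D l * Msg l * ds_sig Msg D l)%type) (fun _ => bool)
       (fun l p => ds_verify Msg D l p.1.1 p.1.2 p.2).

Record os_scheme (n : nat) := {
  os_pp : nat -> Type;
  os_vk : nat -> Type;
  os_sk : nat -> Type;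
  os_mu : nat -> Type;
  os_st : nat -> Type;
  os_rho : nat -> Type;
  os_sig : nat -> Type;
  os_setup : forall l, distr (os_pp l);
  os_keygen : forall l, os_pp l -> distr (os_vk l * os_sk l);
  os_U1 : forall l, os_pp l -> os_vk l -> n.-tuple (seq bool) -> 'I_n ->
            distr (option (os_mu l * os_st l));
  os_S2 : forall l, os_pp l -> os_vk l -> os_sk l -> n.-tuple (seq bool) -> os_mu l ->
            distr (option (os_rho l));
  os_UDer : forall l, os_pp l -> os_vk l -> os_st l -> os_rho l ->
            distr (option (seq bool * os_sig l));
  os_verify : forall l, os_pp l -> os_vk l -> seq bool -> os_sig l -> bool
}.

Record amb_adv (n : nat) (S : os_scheme n) := {
  aa_st : nat -> Type;
  aa1 : Alg (fun l => (os_pp n S l * os_vk n S l * os_sk n S l)%type)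
            (fun l => (n.-tuple (seq bool) * 'I_n * 'I_n * aa_st l)%type);
  aa2 : Alg (fun l => (option (os_mu n S l) * aa_st l)%type) (fun _ => bool)
}.

Definition amb_exp (n : nat) (S : os_scheme n) (A : amb_adv n S) (l : nat) : distr bool :=
  dbind (os_setup n S l) (fun pp =>
  dbind (os_keygen n S l pp) (fun ks =>
  dbind (aa1 n S A l (pp, ks.1, ks.2)) (fun o =>
  let: (M, i0, i1, st) := o in
  dbind (dunif bool) (fun b =>
  dbind (os_U1 n S l pp ks.1 M (if b then i1 else i0)) (fun u =>
  dbind (aa2 n S A l (omap fst u, st)) (fun b' => dret (b' == b))))))).

Definition ambiguous (Eff : EffClass) (n : nat) (S : os_scheme n) : Prop :=
  forall A : amb_adv n S,
    Eff _ _ (aa1 n S A) -> Eff _ _ (aa2 n S A) -> valid_alg _ _ (aa1 n S A) -> valid_alg _ _ (aa2 n S A) ->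
    negligible (fun l => `| prob (amb_exp n S A l) (fun b => b) - 2%:R^-1 |).

Fixpoint merkle_pairs (H : seq bool -> seq bool) (hs : seq (seq bool)) : seq (seq bool) :=
  match hs with
  | a :: b :: t => H (a ++ b) :: merkle_pairs H t
  | _ => [::]
  end.

(* levels [L_0; L_1; ...; L_k] where L_k = hs are the leaves and
   L_{j-1} = pairwise hashes of L_j; node b_1..b_j is entry (b_1..b_j)_2 of L_j *)
Fixpoint merkle_levels (H : seq bool -> seq bool) (k : nat) (hs : seq (seq bool))
  : seq (seq (seq bool)) :=
  match k with
  | 0 => [:: hs]
  | k'.+1 => rcons (merkle_levels H k' (merkle_pairs H hs)) hs
  end.

(* MerkleTree^H(M) = (root, tree) for a list of 2^k messages *)
Definition merkle_tree (H : seq bool -> seq bool) (k : nat) (M : seq (seq bool))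
  : seq bool * seq (seq (seq bool)) :=
  let tr := merkle_levels H k (map H M) in (nth [::] (nth [::] tr 0) 0, tr).

(* sibling of node number q on its level (flip the last bit) *)
Definition sibling (q : nat) : nat := if odd q then q.-1 else q.+1.

(* MerklePath^H(tree, i) = (h_{~b1}, h_{b1 ~b2}, ..., h_{b1..b_{k-1} ~bk}) *)
Definition merkle_path (k : nat) (tr : seq (seq (seq bool))) (i : nat) : seq (seq bool) :=
  [seq nth [::] (nth [::] tr j) (sibling (i %/ 2 ^ (k - j))) | j <- iota 1 k].

Definition root_reconstruct (H : seq bool -> seq bool) (k : nat) (path : seq (seq bool))
  (m : seq bool) (i : nat) : seq bool :=
  foldr (fun j h => let s := nth [::] path j.-1 in
                    if odd (i %/ 2 ^ (k - j)) then H (s ++ h) else H (h ++ s))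
        (H m) (iota 1 k).

Definition ds_msg (C : com_scheme) : nat -> Type := fun l => (seq bool * com_c C l)%type.

Definition hashf (Hf : hash_family) (l : nat) (i : hf_idx Hf l) : seq bool -> seq bool :=
  fun x => val (@hf_eval Hf l i x).

Definition OS_ours (k : nat) (Hf : hash_family) (C : com_scheme) (D : ds_scheme (ds_msg C))
  : os_scheme (2 ^ k) :=
  {| os_pp := fun l => (hf_idx Hf l * com_ck C l * ds_pp _ D l)%type;
     os_vk := ds_vk _ D;
     os_sk := ds_sk _ D;
     os_mu := fun l => (com_c C l : Type);
     os_st := fun l => ((2 ^ k).-tuple (seq bool) * com_c C l * com_rnd C l * 'I_(2 ^ k))%type;
     os_rho := ds_sig _ D;
     os_sig := fun l => (seq bool * com_c C l * ds_sig _ D l * seq (seq bool)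
                         * 'I_(2 ^ k) * com_rnd C l)%type;
     os_setup := fun l =>
       dbind (dunif (hf_idx Hf l)) (fun h =>
       dbind (com_keygen C l) (fun ck =>
       dbind (ds_setup _ D l) (fun pd => dret (h, ck, pd))));
     os_keygen := fun l pp => ds_keygen _ D l pp.2;
     os_U1 := fun l pp vk M j =>
       if uniq M then
         dbind (dunif_seq (com_omega C l pp.1.2)) (fun r =>
           let c := com_commit C l pp.1.2 (tnth M j) r in
           dret (Some (c, (M, c, r, j))))
       else dret None;
     os_S2 := fun l pp vk sk M c =>
       if uniq M then
         dbind (ds_sign _ D l sk ((merkle_tree (hashf Hf l pp.1.1) k M).1, c))
               (fun s => dret (Some s))
       else dret None;
     os_UDer := fun l pp vk st s =>
       let: (M, c, r, j) := st in
       let: (root, tree) := merkle_tree (hashf Hf l pp.1.1) k M in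
       let path := merkle_path k tree j in
       if ds_verify _ D l vk (root, c) s then dret (Some (tnth M j, (root, c, s, path, j, r)))
       else dret None;
     os_verify := fun l pp vk m sg =>
       let: (root, c, s, path, j, r) := sg in
       [&& root == root_reconstruct (hashf Hf l pp.1.1) k path m j,
           c == com_commit C l pp.1.2 m r
         & ds_verify _ D l vk (root, c) s]
  |}.

(* A commitment scheme with hiding makes the user's first message c = Com(M[i_b]; r)
   useless to an adversary who can generate the hash key and the signature keys
   itself.  Given an ambiguity adversary A, the hiding adversary B receives ck,
   samples everything else in the setup of the oblivious signature scheme, runs A
   to obtain (M, i0, i1), challenges with (M[i0], M[i1]) and hands A the challenge
   commitment, or bot when M has repeated entries (then U1 rejects for both values
   of b).  Both experiments have the same success probability, so A's advantage
   equals B's, which is negligible. *)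

From mathcomp Require Import all_boot all_order all_algebra.
From Stdlib Require Import Setoid Morphisms.
Import GRing.Theory Num.Theory.
Local Open Scope ring_scope.

Definition expect {T : Type} (d : distr T) (F : T -> rat) : rat :=
  \sum_(p <- d) p.1 * F p.2.

Lemma eq_expect {T : Type} (d : distr T) (F G : T -> rat) :
  (forall x, F x = G x) -> expect d F = expect d G.
Proof. by move=> eqFG; apply: eq_bigr => p _; rewrite eqFG. Qed.

#[global] Instance expect_proper (T : Type) :
  Proper (eq ==> pointwise_relation T eq ==> eq) (@expect T).
Proof. by move=> d _ <- F G; apply: eq_expect. Qed.

Lemma expect_ret {T : Type} (x : T) F : expect (dret x) F = F x.
Proof. by rewrite /expect big_seq1 mul1r. Qed.

Lemma expect_bind {A B : Type} (d : distr A) (f : A -> distr B) F :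
  expect (dbind d f) F = expect d (fun x => expect (f x) F).
Proof.
rewrite /expect /dbind big_flatten /= big_map; apply: eq_bigr => p _.
by rewrite big_map mulr_sumr; apply: eq_bigr => q _; rewrite mulrA.
Qed.

Lemma expect_swap {A B : Type} (d1 : distr A) (d2 : distr B) F :
  expect d1 (fun x => expect d2 (F x)) = expect d2 (fun y => expect d1 (F^~ y)).
Proof.
rewrite /expect; under eq_bigr do rewrite mulr_sumr.
rewrite exchange_big; apply: eq_bigr => q _; rewrite mulr_sumr.
by apply: eq_bigr => p _; rewrite mulrCA.
Qed.

Lemma sum_weights_expect {T : Type} (d : distr T) :
  \sum_(p <- d) p.1 = expect d (fun _ => 1).
Proof. by apply: eq_bigr => p _; rewrite mulr1. Qed.

Lemma expect_cst {T : Type} (d : distr T) c :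
  \sum_(p <- d) p.1 = 1 -> expect d (fun _ => c) = c.
Proof. by move=> d1; rewrite /expect -mulr_suml d1 mul1r. Qed.

Lemma prob_expect {T : Type} (d : distr T) E : prob d E = expect d (fun x => (E x)%:R).
Proof. by rewrite /prob big_mkcond; apply: eq_bigr => p _; case: (E p.2); rewrite ?mulr1 ?mulr0. Qed.

Lemma sum_weights_unif {T : Type} (s : seq T) :
  (0 < size s)%N -> \sum_(p <- dunif_seq s) p.1 = 1.
Proof.
move=> s_gt0; rewrite big_map big_const_seq count_predT iter_addr_0.
by rewrite -[LHS]mulr_natr mulVf // pnatr_eq0 -lt0n.
Qed.

Lemma is_distr_unif {T : Type} (s : seq T) : (0 < size s)%N -> is_distr (dunif_seq s).
Proof.
move=> s_gt0; rewrite /is_distr sum_weights_unif // eqxx andbT.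
by rewrite all_map; apply: sub_all (all_predT s) => x _ /=; rewrite invr_ge0 ler0n.
Qed.

Lemma is_distr_ret {T : Type} (x : T) : is_distr (dret x).
Proof. by rewrite /is_distr /= big_seq1 eqxx. Qed.

Lemma is_distr_bind {A B : Type} (d : distr A) (f : A -> distr B) :
  is_distr d -> (forall x, is_distr (f x)) -> is_distr (dbind d f).
Proof.
move=> /andP[d_ge0 /eqP d1] f_distr; apply/andP; split.
  elim: d d_ge0 {d1} => //= p d IHd /andP[p_ge0 d_ge0]; rewrite all_cat IHd // andbT.
  have /andP[f_ge0 _] := f_distr p.2.
  by rewrite all_map; apply: sub_all f_ge0 => q /= q_ge0; exact: mulr_ge0.
rewrite sum_weights_expect expect_bind (eq_expect _ _ (fun _ => 1)) -?sum_weights_expect ?d1 //.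
by move=> x; rewrite -sum_weights_expect; have /andP[_ /eqP] := f_distr x.
Qed.

Lemma eq_negligible (f g : nat -> rat) :
  (forall l, f l = g l) -> negligible f -> negligible g.
Proof.
move=> eq_fg f_negl p lc_gt0; have [N fN] := f_negl p lc_gt0.
by exists N => l le_Nl; rewrite -eq_fg; apply: fN.
Qed.

Section EfficientFunctions.
Context {Eff : EffClass} {EffF : EffFClass} (eff_closed : ppt_closed Eff EffF).

Lemma effF_fst X Y Z (f : Fn X (fun l => Y l * Z l)%type) :
  EffF _ _ f -> EffF X Y (fun l x => (f l x).1).
Proof. move=> eff_f; exact: (ef_comp _ _ eff_closed _ _ _ _ _ eff_f (ef_fst _ _ eff_closed _ _)). Qed.

Lemma effF_snd X Y Z (f : Fn X (fun l => Y l * Z l)%type) :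
  EffF _ _ f -> EffF X Z (fun l x => (f l x).2).
Proof. move=> eff_f; exact: (ef_comp _ _ eff_closed _ _ _ _ _ eff_f (ef_snd _ _ eff_closed _ _)). Qed.

Lemma effF_tnth X T n (f : Fn X (fun l => n.-tuple (T l))) (g : Fn X (fun _ => 'I_n)) :
  EffF _ _ f -> EffF _ _ g -> EffF X T (fun l x => tnth (f l x) (g l x)).
Proof.
move=> eff_f eff_g.
exact: (ef_comp _ _ eff_closed _ _ _ _ _ (ef_pair _ _ eff_closed _ _ _ _ _ eff_f eff_g)
  (ef_tnth _ _ eff_closed _ _)).
Qed.

Lemma effF_uniq X n (f : Fn X (fun l => n.-tuple (seq bool))) :
  EffF _ _ f -> EffF X (fun _ => bool) (fun l x => uniq (f l x)).
Proof. move=> eff_f; exact: (ef_comp _ _ eff_closed _ _ _ _ _ eff_f (ef_uniq _ _ eff_closed _)). Qed.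

End EfficientFunctions.

Ltac solve_effF eff_closed :=
  repeat first [ apply: (ef_id _ _ eff_closed) | apply: (ef_pair _ _ eff_closed)
               | apply: (effF_tnth eff_closed) | apply: (effF_uniq eff_closed)
               | apply: (effF_fst eff_closed) | apply: (effF_snd eff_closed) ].

Section HidingReduction.
Context {k : nat} {Hf : hash_family} {C : com_scheme} {D : ds_scheme (ds_msg C)}.
Local Notation OS := (OS_ours k Hf C D).
Variable A : amb_adv (2 ^ k) OS.

(* The boolean records whether A's message list is duplicate-free. *)
Definition red_st l := (bool * aa_st _ _ A l)%type.
Definition red_out l := (seq bool * seq bool * red_st l)%type.

Definition ck_idx l := (com_ck C l * hf_idx Hf l)%type.
Definition ck_idx_pp l := (ck_idx l * ds_pp _ D l)%type.
Definition ck_idx_pp_keys l := (ck_idx_pp l * (ds_vk _ D l * ds_sk _ D l))%type.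
Definition amb_input l := (os_pp _ OS l * os_vk _ OS l * os_sk _ OS l)%type.
Definition amb_choice l :=
  ((2 ^ k).-tuple (seq bool) * 'I_(2 ^ k) * 'I_(2 ^ k) * aa_st _ _ A l)%type.

Definition red_amb_input : Fn ck_idx_pp_keys amb_input :=
  fun l x => ((x.1.1.2, x.1.1.1, x.1.2), x.2.1, x.2.2).

Definition red_challenge : Fn (fun l => ck_idx_pp_keys l * amb_choice l)%type red_out :=
  fun l x => (tnth x.2.1.1.1 x.2.1.1.2, tnth x.2.1.1.1 x.2.1.2, (uniq x.2.1.1.1, x.2.2)).

Definition red1_keys : Alg ck_idx_pp_keys red_out := fun l x =>
  dbind (aa1 _ _ A l (red_amb_input l x)) (fun o => dret (red_challenge l (x, o))).
Definition red1_pp : Alg ck_idx_pp red_out := fun l x =>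
  dbind (ds_keygen _ D l x.2) (fun ks => red1_keys l (x, ks)).
Definition red1_idx : Alg ck_idx red_out := fun l x =>
  dbind (ds_setup _ D l) (fun pp => red1_pp l (x, pp)).
Definition red1 : Alg (com_ck C) red_out := fun l ck =>
  dbind (dunif (hf_idx Hf l)) (fun h => red1_idx l (ck, h)).

Definition red2 : Alg (fun l => com_c C l * red_st l)%type (fun _ => bool) :=
  fun l p => aa2 _ _ A l (if p.2.1 then Some p.1 else None, p.2.2).

Definition red_adv : hid_adv C := {| ha_st := red_st; ha1 := red1; ha2 := red2 |}.

Lemma prob_amb_exp_red l :
  (forall ck, 0 < size (com_omega C l ck))%N ->
  prob (amb_exp _ _ A l) id = prob (hiding_exp C red_adv l) id.
Proof.
move=> omega_gt0; rewrite !prob_expect /amb_exp /hiding_exp /= /red1 /red1_idx /red1_pp /red1_keys.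
repeat setoid_rewrite expect_bind; repeat setoid_rewrite expect_ret.
rewrite [LHS]expect_swap.
apply: eq_expect => ck; apply: eq_expect => h; apply: eq_expect => pp; apply: eq_expect => ks.
apply: eq_expect => -[[[M i0] i1] st] /=.
rewrite !expect_bind; apply: eq_expect => b; rewrite /commit_rand /red2.
have -> : (if b then tnth M i1 else tnth M i0) = tnth M (if b then i1 else i0) by case: b.
case: (uniq M) => /=.
  rewrite !expect_bind; apply: eq_expect => r; rewrite !expect_ret /= !expect_bind.
  by apply: eq_expect => b'; rewrite !expect_ret eq_sym.
(* U1 outputs bot without sampling, and red2 ignores the challenge commitment. *)
repeat setoid_rewrite expect_bind; repeat setoid_rewrite expect_ret.
rewrite /= expect_cst ?sum_weights_unif //.
by apply: eq_expect => b'; rewrite eq_sym.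
Qed.

Context {Eff : EffClass} {EffF : EffFClass}.

Lemma valid_red1 : hash_ok Eff EffF Hf -> ds_ok Eff EffF (ds_msg C) D ->
  valid_alg _ _ (aa1 _ _ A) -> valid_alg _ _ red1.
Proof.
move=> [idx_gt0 _] [setup_distr [keygen_distr _]] aa1_distr l ck.
apply: is_distr_bind => [|h]; first by apply: is_distr_unif; rewrite -cardE.
apply: is_distr_bind => // pp; apply: is_distr_bind => // ks.
by apply: is_distr_bind => // o; apply: is_distr_ret.
Qed.

Lemma valid_red2 : valid_alg _ _ (aa2 _ _ A) -> valid_alg _ _ red2.
Proof. by move=> aa2_distr l p; apply: aa2_distr. Qed.

Hypothesis eff_closed : ppt_closed Eff EffF.

Lemma eff_red1 : hash_ok Eff EffF Hf -> ds_ok Eff EffF (ds_msg C) D ->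
  Eff _ _ (aa1 _ _ A) -> Eff _ _ red1.
Proof.
move=> [_ [eff_hash_key _]] [_ [_ [_ [eff_setup [eff_keygen _]]]]] eff_aa1.
have eff_input : EffF _ _ red_amb_input by rewrite /red_amb_input; solve_effF eff_closed.
have eff_challenge : EffF _ _ red_challenge by rewrite /red_challenge; solve_effF eff_closed.
have eff_keys : Eff _ _ red1_keys.
  apply: (e_bind _ _ eff_closed _ _ _ _ (fun l y => dret (red_challenge l y))).
    exact: (e_pre _ _ eff_closed _ _ _ _ _ eff_input eff_aa1).
  exact: (e_ret _ _ eff_closed _ _ _ eff_challenge).
have eff_pp : Eff _ _ red1_pp.
  apply: (e_bind _ _ eff_closed _ _ _ _ red1_keys _ eff_keys).
  by apply: (e_pre _ _ eff_closed _ _ _ _ _ _ eff_keygen); solve_effF eff_closed.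
have eff_idx : Eff _ _ red1_idx.
  apply: (e_bind _ _ eff_closed _ _ _ _ red1_pp _ eff_pp).
  exact: (e_pre _ _ eff_closed _ _ _ _ _ (ef_tt _ _ eff_closed _) eff_setup).
apply: (e_bind _ _ eff_closed _ _ _ _ red1_idx _ eff_idx).
exact: (e_pre _ _ eff_closed _ _ _ _ _ (ef_tt _ _ eff_closed _) eff_hash_key).
Qed.

Lemma eff_red2 : Eff _ _ (aa2 _ _ A) -> Eff _ _ red2.
Proof.
move=> eff_aa2; apply: (e_pre _ _ eff_closed _ _ _ _ _ _ eff_aa2).
apply: (ef_pair _ _ eff_closed); last by solve_effF eff_closed.
apply: (ef_if _ _ eff_closed); first by solve_effF eff_closed.
  apply: (ef_comp _ _ eff_closed _ _ _ _ _ _ (ef_some _ _ eff_closed _)).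
  by solve_effF eff_closed.
exact: (ef_none _ _ eff_closed).
Qed.

End HidingReduction.

Local Close Scope ring_scope.

Theorem theorem1
  (Eff : EffClass)
  (EffF : EffFClass)
  (HPPT : ppt_closed Eff EffF)
  (k : nat) (hk : (0 < k)%N)
  (Hf : hash_family) (C : com_scheme) (D : ds_scheme (ds_msg C))
  (hHf : hash_ok Eff EffF Hf) (hC : com_ok Eff EffF C) (hD : ds_ok Eff EffF (ds_msg C) D)
  (hiding : comp_hiding Eff C) :
  ambiguous Eff (2 ^ k) (OS_ours k Hf C D).
Proof.
move=> A eff_aa1 eff_aa2 aa1_distr aa2_distr.
have [_ [omega_ok _]] := hC.
apply: eq_negligible (hiding (red_adv A) (eff_red1 A HPPT hHf hD eff_aa1) (eff_red2 A HPPT eff_aa2)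
  (valid_red1 A hHf hD aa1_distr) (valid_red2 A aa2_distr)) => l.
by rewrite prob_amb_exp_red // => ck; have [] := omega_ok l ck.
Qed.
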